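(* Let $G$ be a graph, $X\subseteq V(G)$ with $F:=G-X$ a pseudoforest, and $k$ an integer. Assume that: (1) there is no $v\in X$ with $\mathrm{Conf}_F(\{v\})\ge |X|$; (2) there are no distinct non-adjacent $u,v\in X$ with $\mathrm{Conf}_F(\{u,v\})\ge|X|$; (3) for all distinct $u,v,w\in X$ such that $\{u,v,w\}$ is independent in $G$ and $\mathrm{Conf}_F(\{u,v,w\})\ge|X|$, there is an anchor triangle $P$ with $N_G(V(P))=\{u,v,w\}$; (4) there is no connected component $P$ of $F$ which is not a non-redundant anchor triangle and satisfies $\mathrm{Conf}_P(X')=0$ for every chunk $X'$. Then the number of connected components of $F$ is at most $|X|^4+|X|^3$.
   Context: All graphs are finite, simple and undirected; a pseudoforest is a graph each of whose connected components contains at most one cycle. $\alpha(H)$ is the independence number of $H$. For a subgraph $F'\subseteq F$ and $X'\subseteq X$, $\mathrm{Conf}_{F'}(X') := \alpha(F') - \alpha(F' - N_G(X'))$, where $N_G(S)$ is the set of vertices outside $S$ adjacent to some vertex of $S$. A chunk is a set $X'\subseteq X$ that is independent in $G$, satisfies $1\le |X'|\le 3$, and has $\mathrm{Conf}_F(X') < |X|$. An anchor triangle is a connected component $P$ of $F$ with $V(P)=\{p_1,p_2,p_3\}$ such that there are vertices $x_1,x_2,x_3\in X$ with $N_G(p_1)=\{p_2,p_3,x_1\}$, $N_G(p_2)=\{p_1,p_3,x_2\}$, $N_G(p_3)=\{p_1,p_2,x_3\}$; it is non-redundant if no other anchor triangle has the same open neighborhood in $G$. *)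

From mathcomp Require Import all_boot.
Set Implicit Arguments. Unset Strict Implicit. Unset Printing Implicit Defensive.

(* A simple graph G on a finite vertex type T is a symmetric irreflexive
   relation e.  All subgraphs considered (F = G - X, its components, and
   F' - N_G(X')) are induced subgraphs, so they are given by vertex sets. *)
Section Defs.
Variables (T : finType) (e : rel T).

Definition nbhd (v : T) : {set T} := [set y | e v y].

Definition NG (S : {set T}) : {set T} :=
  [set y | (y \notin S) && [exists x in S, e x y]].

Definition indep (I : {set T}) : bool :=
  [forall x in I, forall y in I, ~~ e x y].

Definition alpha (S : {set T}) : nat :=
  \max_(I : {set T} | (I \subset S) && indep I) #|I|.

Definition conf (S X' : {set T}) : nat := alpha S - alpha (S :\: NG X').

Definition Frel (X : {set T}) : rel T :=
  [rel x y | e x y && (x \notin X) && (y \notin X)].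

Definition VF (X : {set T}) : {set T} := ~: X.

Definition comps (X : {set T}) : {set {set T}} :=
  [set [set y | connect (Frel X) x y] | x in ~: X].

(* a cycle of a graph with edge relation r: a duplicate-free closed walk
   of length >= 3; it is identified by its edge set (unordered pairs stored
   in both orientations) *)
Definition is_cycle (r : rel T) (s : seq T) : bool :=
  [&& uniq s, 2 < size s & cycle r s].

Definition cycle_edges (s : seq T) : {set T * T} :=
  [set p | (p.1 \in s) && (p.2 \in s) &&
           ((p.2 == next s p.1) || (p.1 == next s p.2))].

(* pseudoforest: each connected component contains at most one cycle, i.e.
   any two cycles lying in the same component are the same cycle *)
Definition pseudoforest (X : {set T}) : Prop :=
  forall s1 s2 : seq T, is_cycle (Frel X) s1 -> is_cycle (Frel X) s2 ->
  forall x1 x2, x1 \in s1 -> x2 \in s2 -> connect (Frel X) x1 x2 ->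
  cycle_edges s1 = cycle_edges s2.

Definition anchor (X P : {set T}) : Prop :=
  P \in comps X /\
  exists p1 p2 p3 x1 x2 x3,
    [/\ P = [set p1; p2; p3], #|P| = 3,
        [/\ x1 \in X, x2 \in X & x3 \in X] &
        [/\ nbhd p1 = [set p2; p3; x1],
            nbhd p2 = [set p1; p3; x2] &
            nbhd p3 = [set p1; p2; x3]]].

Definition nonredundant_anchor (X P : {set T}) : Prop :=
  anchor X P /\ forall Q, anchor X Q -> Q <> P -> NG Q <> NG P.

Definition chunk (X X' : {set T}) : Prop :=
  [/\ X' \subset X, indep X', 1 <= #|X'| <= 3 & conf (VF X) X' < #|X|].

End Defs.

(* A component P contributes to Conf_F(X') exactly Conf_P(X'), because alpha
   and Conf are additive over the components of F.  Hence a set X' with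
   Conf_F(X') < |X| (in particular a chunk) has Conf_P(X') > 0 for fewer than
   |X| components P, and at most |X|^3 * |X| components are touched by some
   such X' of size at most 3.  By (4) every other component is a non-redundant
   anchor triangle, and these are determined by their neighbourhoods, which are
   nonempty subsets of X of size at most 3: there are at most |X|^3 of them. *)

From mathcomp Require Import all_boot zify.
From Stdlib Require Import Classical.
Set Implicit Arguments. Unset Strict Implicit. Unset Printing Implicit Defensive.

Section IndependenceNumber.
Variables (T : finType) (e : rel T).
Hypothesis e_sym : symmetric e.

Lemma indepP (I : {set T}) :
  reflect {in I &, forall x y, ~~ e x y} (indep e I).
Proof.
apply: (iffP forall_inP) => [indepI x y xI yI | indepI x xI].
  by have /forall_inP := indepI x xI; apply.
by apply/forall_inP => y; apply: indepI.
Qed.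

Lemma indepS (I J : {set T}) : I \subset J -> indep e J -> indep e I.
Proof.
by move=> /subsetP IJ /indepP indepJ; apply/indepP => x y /IJ xJ /IJ; apply: indepJ.
Qed.

Lemma indep_leq_alpha (S I : {set T}) :
  I \subset S -> indep e I -> #|I| <= alpha e S.
Proof.
by move=> IS indepI; apply: (leq_bigmax_cond (F := fun I : {set T} => #|I|)); rewrite IS.
Qed.

Lemma alpha_leq (S : {set T}) k :
  (forall I : {set T}, I \subset S -> indep e I -> #|I| <= k) -> alpha e S <= k.
Proof. by move=> bound; apply/bigmax_leqP => I /andP[]; apply: bound. Qed.

Lemma alpha_witness (S : {set T}) :
  exists2 I : {set T}, (I \subset S) && indep e I & alpha e S = #|I|.
Proof.
have : 0 < #|[pred I : {set T} | (I \subset S) && indep e I]|.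
  apply/card_gt0P; exists set0; rewrite inE sub0set.
  by apply/indepP => x; rewrite inE.
by move=> /(eq_bigmax_cond (fun I : {set T} => #|I|)) [I ? maxI]; exists I; rewrite // /alpha -maxI.
Qed.

Lemma alphaS (S S' : {set T}) : S \subset S' -> alpha e S <= alpha e S'.
Proof.
by move=> SS'; apply: alpha_leq => I IS; apply: indep_leq_alpha (subset_trans IS SS').
Qed.

Definition separated (A B : {set T}) :=
  forall x y, x \in A -> y \in B -> (x != y) && ~~ e x y.

Lemma alphaU (A B : {set T}) :
  separated A B -> alpha e (A :|: B) = alpha e A + alpha e B.
Proof.
move=> sepAB; apply/eqP; rewrite eqn_leq; apply/andP; split.
  apply: alpha_leq => I IAB indepI.
  rewrite -(setIidPl IAB) setIUr.
  apply: leq_trans (leq_card_setU _ _) (leq_add _ _);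
    by apply: indep_leq_alpha (subsetIr _ _) (indepS (subsetIl _ _) indepI).
have [IA /andP[IAA /indepP indepIA] ->] := alpha_witness A.
have [IB /andP[IBB /indepP indepIB] ->] := alpha_witness B.
have [/subsetP subA /subsetP subB] := (IAA, IBB).
have disjoint_I : [disjoint IA & IB].
  apply/pred0P => x /=; apply/negP => /andP[/subA xA /subB xB].
  by have := sepAB x x xA xB; rewrite eqxx.
have /eqP <- : #|IA :|: IB| == #|IA| + #|IB| by rewrite (leq_card_setU IA IB).2.
apply: indep_leq_alpha; first exact: setUSS.
apply/indepP => x y; rewrite !inE => /orP[xA|xB] /orP[yA|yB].
- exact: indepIA.
- by case/andP: (sepAB x y (subA _ xA) (subB _ yB)).
- by case/andP: (sepAB y x (subA _ yA) (subB _ xB)); rewrite e_sym.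
- exact: indepIB.
Qed.

Lemma confU (A B Y : {set T}) :
  separated A B -> conf e (A :|: B) Y = conf e A Y + conf e B Y.
Proof.
move=> sepAB; rewrite /conf setDUl !alphaU //; last first.
  by move=> x y; rewrite !inE => /andP[_ xA] /andP[_ yB]; apply: sepAB.
have := alphaS (subsetDl A (NG e Y)); have := alphaS (subsetDl B (NG e Y)).
lia.
Qed.

End IndependenceNumber.

Section Components.
Variables (T : finType) (e : rel T) (X : {set T}).
Hypothesis e_sym : symmetric e.
Local Notation r := (Frel e X).

Lemma connect_Frel_sym : connect_sym r.
Proof.
by apply: sym_connect_sym => x y; rewrite /Frel /= e_sym -!andbA; do !bool_congr.
Qed.

Lemma comps_subset P : P \in comps e X -> P \subset VF X.
Proof.
case/imsetP => a aX -> {P}; apply/subsetP => y; rewrite inE.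
rewrite connect_Frel_sym => /connectP [[|z p] /= path_yp]; first by move=> <-.
by case/andP: path_yp => /andP[/andP[_ yX] _] _ _; rewrite inE.
Qed.

Lemma compsE P x : P \in comps e X -> x \in P -> P = [set y | connect r x y].
Proof.
case/imsetP => a _ -> {P}; rewrite inE => ax; apply/setP => y; rewrite !inE.
apply/idP/idP => [ay|]; last exact: connect_trans.
by apply: connect_trans ay; rewrite connect_Frel_sym.
Qed.

Lemma comps_separated P Q :
  P \in comps e X -> Q \in comps e X -> P != Q -> separated e P Q.
Proof.
move=> PC QC neqPQ x y xP yQ; apply: contraR neqPQ.
rewrite negb_and !negbK => xy_adj; apply/eqP.
have xy_conn : connect r x y.
  case/orP: xy_adj => [/eqP <-|exy]; first exact: connect0.
  have /subsetP/(_ x xP) := comps_subset PC; have /subsetP/(_ y yQ) := comps_subset QC.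
  by rewrite !inE => yX xX; apply: connect1; rewrite /Frel /= exy xX yX.
have yP : y \in P by rewrite (compsE PC xP) inE.
by rewrite (compsE PC yP) (compsE QC yQ).
Qed.

Lemma bigcup_comps : \bigcup_(P in comps e X) P = VF X.
Proof.
apply/eqP; rewrite eqEsubset; apply/andP; split.
  by apply/bigcupsP => P; apply: comps_subset.
apply/subsetP => x xX; apply/bigcupP; exists [set y | connect r x y].
  exact: imset_f.
by rewrite inE connect0.
Qed.

Lemma conf_bigcup_seq (s : seq {set T}) Y :
  uniq s -> {subset s <= comps e X} ->
  conf e (\bigcup_(P <- s) P) Y = \sum_(P <- s) conf e P Y.
Proof.
elim: s => [|P s IHs] /=; first by rewrite !big_nil /conf set0D subnn.
case/andP=> Pnotin_s uniq_s s_comps.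
have PC : P \in comps e X by apply: s_comps; rewrite mem_head.
have s_comps' : {subset s <= comps e X}.
  by move=> Q Qs; apply: s_comps; rewrite inE Qs orbT.
rewrite !big_cons confU ?IHs // => x y xP.
rewrite bigcup_seq => /bigcupP [Q Qs yQ].
apply: comps_separated xP yQ => //; first exact: s_comps'.
by apply: contraNneq Pnotin_s => ->.
Qed.

Lemma conf_VF_sum Y : conf e (VF X) Y = \sum_(P in comps e X) conf e P Y.
Proof.
rewrite -bigcup_comps -!big_enum conf_bigcup_seq ?enum_uniq //.
by move=> P; rewrite mem_enum.
Qed.

Lemma card_comps_conf_gt0 Y :
  #|[set P in comps e X | 0 < conf e P Y]| <= conf e (VF X) Y.
Proof.
set A := [set P in comps e X | _].
have AC : A \subset comps e X by apply/subsetP => P; rewrite inE => /andP[].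
rewrite conf_VF_sum (big_setID A) /= (setIidPr AC) -sum1_card.
apply: leq_trans (leq_addr _ _); apply: leq_sum => P.
by rewrite inE => /andP[].
Qed.

End Components.

Section SmallSubsets.
Variable T : finType.

Definition small_subsets (X : {set T}) : {set {set T}} :=
  [set Y : {set T} | (Y \subset X) && (0 < #|Y| <= 3)].

Lemma card_bigcup_leq (I : finType) (P : pred I) (F : I -> {set T}) :
  #|\bigcup_(i | P i) F i| <= \sum_(i | P i) #|F i|.
Proof.
apply: (big_ind2 (fun (A : {set T}) n => #|A| <= n)) => [|A m B n leAm leBn|//].
  by rewrite cards0.
exact: leq_trans (leq_card_setU A B) (leq_add leAm leBn).
Qed.

Lemma card_set3 (a b c : T) : #|[set a; b; c]| <= 3.
Proof.
apply: leq_trans (leq_card_setU _ _) _; rewrite cards1 addn1 ltnS.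
by apply: leq_trans (leq_card_setU _ _) _; rewrite !cards1.
Qed.

Lemma card_le3_set3 (Y : {set T}) :
  0 < #|Y| <= 3 -> exists a b c, Y = [set a; b; c].
Proof.
rewrite cardE -[in X in exists _ _ _, X = _](set_enum Y).
case: (enum Y) => [|a [|b [|c [|d s]]]] //= _;
  [exists a, a, a | exists a, b, b | exists a, b, c];
  by apply/setP => y; rewrite !inE; do ?case: (_ == _).
Qed.

Lemma card_small_subsets (X : {set T}) : #|small_subsets X| <= #|X| ^ 3.
Proof.
pose set3 (t : T * (T * T)) := [set t.1; t.2.1; t.2.2].
apply: (@leq_trans #|set3 @: setX X (setX X X)|); last first.
  by apply: leq_trans (leq_imset_card _ _) _; rewrite !cardsX !expnS expn0 muln1.
apply/subset_leq_card/subsetP => Y; rewrite inE => /andP[/subsetP YX /card_le3_set3].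
move=> [a [b [c defY]]]; apply/imsetP; exists (a, (b, c)) => //.
by rewrite !inE /= !YX // defY !inE eqxx ?orbT.
Qed.

End SmallSubsets.

Section Anchors.
Variables (T : finType) (e : rel T) (X : {set T}).
Hypothesis e_sym : symmetric e.

Lemma NG_anchor_sub3 P : anchor e X P -> exists x1 x2 x3,
  [/\ [set x1; x2; x3] \subset X, x1 \in NG e P & NG e P \subset [set x1; x2; x3]].
Proof.
case=> PC [p1 [p2 [p3 [x1 [x2 [x3 [defP _ [x1X x2X x3X] [n1 n2 n3]]]]]]]].
exists x1, x2, x3; split.
- by apply/subsetP => y; rewrite !inE => /orP[/orP[]|] /eqP ->.
- rewrite inE; apply/andP; split.
    by apply: contraL x1X => /(subsetP (comps_subset e_sym PC)); rewrite inE.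
  apply/existsP; exists p1; rewrite defP !inE eqxx /=.
  by have /setP/(_ x1) := n1; rewrite !inE eqxx orbT.
- apply/subsetP => y; rewrite inE defP => /andP[yP /existsP [x /andP[xP exy]]].
  have : y \in nbhd e x by rewrite inE.
  move: yP; rewrite !inE in xP.
  by case/orP: xP => [/orP[]|] /eqP ->; rewrite ?n1 ?n2 ?n3 !inE; do !case: (_ == _).
Qed.

Lemma NG_anchor_small P : anchor e X P -> NG e P \in small_subsets X.
Proof.
case/NG_anchor_sub3 => x1 [x2 [x3 [sub3X x1N NGsub3]]].
rewrite inE (subset_trans NGsub3 sub3X) /=; apply/andP; split.
  by apply/card_gt0P; exists x1.
exact: leq_trans (subset_leq_card NGsub3) (card_set3 _ _ _).
Qed.

Lemma card_nonredundant_anchors (D : {set {set T}}) :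
  {in D, forall P, nonredundant_anchor e X P} -> #|D| <= #|small_subsets X|.
Proof.
move=> D_nonred; rewrite -(card_in_imset (f := NG e)) => [|P Q PD QD NG_PQ].
  apply/subset_leq_card/subsetP => _ /imsetP [P PD ->].
  by apply: NG_anchor_small; case: (D_nonred P PD).
case: (eqVneq P Q) => // /eqP/nesym neqQP.
have [[anchorQ _] [_ P_unique]] := (D_nonred Q QD, D_nonred P PD).
by case: (P_unique Q anchorQ neqQP (esym NG_PQ)).
Qed.

End Anchors.

Section TouchedComponents.
Variables (T : finType) (e : rel T) (X : {set T}).
Hypothesis e_sym : symmetric e.

(* Chunks are among the sets Y quantified here. *)
Definition touched : {set {set T}} :=
  [set P in comps e X | [exists Y in small_subsets X,
                           (conf e (VF X) Y < #|X|) && (0 < conf e P Y)]].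

Lemma card_touched : #|touched| <= #|small_subsets X| * #|X|.
Proof.
pose light Y := (Y \in small_subsets X) && (conf e (VF X) Y < #|X|).
have touched_sub :
    touched \subset \bigcup_(Y | light Y) [set P in comps e X | 0 < conf e P Y].
  apply/subsetP => P; rewrite inE => /andP[PC /exists_inP [Y Ysmall /andP[YF YP]]].
  by apply/bigcupP; exists Y; rewrite /light ?Ysmall // inE PC.
apply: leq_trans (subset_leq_card touched_sub) _.
apply: leq_trans (card_bigcup_leq _ _) _.
apply: (@leq_trans (\sum_(Y | light Y) #|X|)).
  apply: leq_sum => Y /andP[_ lightY].
  by apply: leq_trans (ltnW lightY); apply: card_comps_conf_gt0.
rewrite sum_nat_const leq_mul2r; apply/orP; right.
by apply/subset_leq_card/subsetP => Y /andP[].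
Qed.

End TouchedComponents.

Theorem lemma6 (T : finType) (e : rel T) (X : {set T}) :
  symmetric e -> irreflexive e ->
  pseudoforest e X ->
  (* (1) *)
  (forall v, v \in X -> conf e (VF X) [set v] < #|X|) ->
  (* (2) *)
  (forall u v, u \in X -> v \in X -> u != v -> ~~ e u v ->
     conf e (VF X) [set u; v] < #|X|) ->
  (* (3) *)
  (forall u v w, u \in X -> v \in X -> w \in X ->
     u != v -> u != w -> v != w -> indep e [set u; v; w] ->
     #|X| <= conf e (VF X) [set u; v; w] ->
     exists P, anchor e X P /\ NG e P = [set u; v; w]) ->
  (* (4) *)
  ~ (exists P, P \in comps e X /\ ~ nonredundant_anchor e X P /\
       forall X', chunk e X X' -> conf e P X' = 0) ->
  #|comps e X| <= #|X| ^ 4 + #|X| ^ 3.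
Proof.
move=> e_sym _ _ _ _ _ no_bad_comp.
have untouched_nonredundant :
    {in comps e X :\: touched e X, forall P, nonredundant_anchor e X P}.
  move=> P; rewrite inE => /andP[untouched PC].
  apply: NNPP => redundant; apply: no_bad_comp; exists P; do !split => //.
  move=> Y [YX _ Ycard YF]; apply/eqP; rewrite eqn0Ngt.
  apply: contra untouched => P_conf; rewrite inE PC; apply/exists_inP.
  by exists Y; [rewrite inE YX Ycard | rewrite YF P_conf].
rewrite -(cardsID (touched e X)) expnSr.
apply: leq_add; last first.
  exact: leq_trans (card_nonredundant_anchors e_sym untouched_nonredundant)
                   (card_small_subsets X).
apply: leq_trans (subset_leq_card (subsetIr _ _)) _.
apply: leq_trans (card_touched X e_sym) _.
by rewrite leq_mul2r card_small_subsets orbT.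
Qed.
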